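(* Suppose $\mathit{Act}$ is infinite. Then $\mathcal{E}_v'$ is complete for $\simeq$ over open monitors: for all monitors $m,n$ (possibly containing variables), if $m\simeq n$ then $\mathcal{E}_v'\vdash m=n$.
   Context: Monitors: terms $m,n ::= v \mid a.m \mid m+n \mid x$ over an action set $\mathit{Act}$ ($a\in\mathit{Act}$) and a countably infinite variable set $\mathit{Var}$, verdicts $v::=\mathit{end}\mid\mathit{yes}\mid\mathit{no}$; closed monitors contain no variables; a closed substitution maps variables to closed monitors. Transitions $\xrightarrow{\alpha}$, $\alpha\in\mathit{Act}\cup\{\tau\}$ ($\tau\notin\mathit{Act}$): least relation with $a.m\xrightarrow{a}m$; $m\xrightarrow{\alpha}m'$ implies $m+n\xrightarrow{\alpha}m'$ and $n+m\xrightarrow{\alpha}m'$; $v\xrightarrow{\alpha}v$ for each verdict $v$. Weak transitions: $m\xRightarrow{\varepsilon}m'$ iff $m(\xrightarrow{\tau})^*m'$; $m\xRightarrow{a}m'$ iff $m\xRightarrow{\varepsilon}\xrightarrow{a}\xRightarrow{\varepsilon}m'$; $m\xRightarrow{as'}m'$ ($s'\neq\varepsilon$) iff $m\xRightarrow{a}m_1\xRightarrow{s'}m'$. For closed $m$: $L_a(m)=\{s\mid m\xRightarrow{s}\mathit{yes}\}$, $L_r(m)=\{s\mid m\xRightarrow{s}\mathit{no}\}$; closed $m\simeq n$ iff $L_a(m)=L_a(n)$ and $L_r(m)=L_r(n)$; for open monitors $m\simeq n$ iff $\sigma(m)\simeq\sigma(n)$ for all closed substitutions $\sigma$. $\mathcal{E}\vdash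 m=n$ denotes derivability by reflexivity, symmetry, transitivity, substitution (from $t=t'$ infer $\sigma(t)=\sigma(t')$ for any substitution) and congruence for $a.\_$ and $+$. $\mathcal{E}_v$ consists of (A1) $x+y=y+x$; (A2) $x+(y+z)=(x+y)+z$; (A3) $x+x=x$; (A4) $x+\mathit{end}=x$; and, for each $a\in\mathit{Act}$, ($E_a$) $a.\mathit{end}=\mathit{end}$; ($Y_a$) $\mathit{yes}=\mathit{yes}+a.\mathit{yes}$; ($N_a$) $\mathit{no}=\mathit{no}+a.\mathit{no}$; ($D_a$) $a.(x+y)=a.x+a.y$. $\mathcal{E}_v'=\mathcal{E}_v\cup\{O1\}$ where (O1) $\mathit{yes}+\mathit{no}=\mathit{yes}+\mathit{no}+x$. *)

From Stdlib Require Import List Relations.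
Import ListNotations.
Set Implicit Arguments.

Inductive verdict : Type := vend | vyes | vno.

Section Monitors.
Variable Act : Type.

Inductive mon : Type :=
| MVerd : verdict -> mon
| MPre  : Act -> mon -> mon
| MSum  : mon -> mon -> mon
| MVar  : nat -> mon.

Fixpoint closed (m : mon) : Prop :=
  match m with
  | MVerd _ => True
  | MPre _ m => closed m
  | MSum m n => closed m /\ closed n
  | MVar _ => False
  end.

Fixpoint subst (s : nat -> mon) (m : mon) : mon :=
  match m with
  | MVerd v => MVerd v
  | MPre a m => MPre a (subst s m)
  | MSum m n => MSum (subst s m) (subst s n)
  | MVar x => s x
  end.

Definition closed_subst (s : nat -> mon) : Prop := forall x, closed (s x).

(* labels: Some a = action a, None = tau *)
Inductive step : mon -> option Act -> mon -> Prop :=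
| st_pre : forall a m, step (MPre a m) (Some a) m
| st_suml : forall m n al m', step m al m' -> step (MSum m n) al m'
| st_sumr : forall m n al m', step m al m' -> step (MSum n m) al m'
| st_verd : forall v al, step (MVerd v) al (MVerd v).

Definition tau_star : mon -> mon -> Prop :=
  clos_refl_trans mon (fun m m' => step m None m').

Fixpoint wstep (m : mon) (s : list Act) (m' : mon) : Prop :=
  match s with
  | [] => tau_star m m'
  | a :: s' => exists m1 m2 m3,
      tau_star m m1 /\ step m1 (Some a) m2 /\ tau_star m2 m3 /\ wstep m3 s' m'
  end.

Definition La (m : mon) (s : list Act) : Prop := wstep m s (MVerd vyes).
Definition Lr (m : mon) (s : list Act) : Prop := wstep m s (MVerd vno).

Definition cequiv (m n : mon) : Prop :=
  (forall s, La m s <-> La n s) /\ (forall s, Lr m s <-> Lr n s).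

Definition mequiv (m n : mon) : Prop :=
  forall s, closed_subst s -> cequiv (subst s m) (subst s n).

Inductive derivable (E : mon -> mon -> Prop) : mon -> mon -> Prop :=
| d_ax : forall t t', E t t' -> derivable E t t'
| d_refl : forall t, derivable E t t
| d_sym : forall t t', derivable E t t' -> derivable E t' t
| d_trans : forall t t' t'', derivable E t t' -> derivable E t' t'' -> derivable E t t''
| d_subst : forall (s : nat -> mon) t t', derivable E t t' -> derivable E (subst s t) (subst s t')
| d_pre : forall a t t', derivable E t t' -> derivable E (MPre a t) (MPre a t')
| d_sum : forall t1 t1' t2 t2', derivable E t1 t1' -> derivable E t2 t2' ->
    derivable E (MSum t1 t2) (MSum t1' t2').

Definition vx := MVar 0.
Definition vy := MVar 1.
Definition vz := MVar 2.
Definition mend := MVerd vend.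
Definition myes := MVerd vyes.
Definition mno := MVerd vno.

Inductive Ev : mon -> mon -> Prop :=
| A1 : Ev (MSum vx vy) (MSum vy vx)
| A2 : Ev (MSum vx (MSum vy vz)) (MSum (MSum vx vy) vz)
| A3 : Ev (MSum vx vx) vx
| A4 : Ev (MSum vx mend) vx
| Ea : forall a, Ev (MPre a mend) mend
| Ya : forall a, Ev myes (MSum myes (MPre a myes))
| Na : forall a, Ev mno (MSum mno (MPre a mno))
| Da : forall a, Ev (MPre a (MSum vx vy)) (MSum (MPre a vx) (MPre a vy)).

Inductive Evp : mon -> mon -> Prop :=
| Evp_Ev : forall t t', Ev t t' -> Evp t t'
| O1 : Evp (MSum myes mno) (MSum (MSum myes mno) vx).

End Monitors.

Definition infinite_type (A : Type) : Prop :=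
  forall l : list A, exists a : A, ~ In a l.

(* Every monitor m is provably equal to the sum of its path terms w.u, where
   (w, u) ranges over [paths m]: u is a verdict or a variable reached from m
   along the word w ([normal_form]).  The axioms make [summand t T := t + T = T]
   a preorder whose antisymmetry yields equality, so it suffices to show that
   every path term of n is a summand of the normal form of m when m ~ n.

   Semantically ([paths_absorbed]), equivalence forces each path (w, u) of n to
   be "absorbed" by the paths of m: a yes/no leaf must extend a path of m ending
   in the same verdict (set all variables to end), and a variable leaf x must
   either be a path of m or have w extend both a yes- and a no-path of m (probe x
   by b.yes and b.no with b a fresh action, available because Act is infinite).
   Syntactically ([summand_path_absorbed]), each such situation is discharged by
   the axioms: verdicts absorb continuations (Y_a, N_a, E_a, D_a) and a word
   leading to both verdicts absorbs anything (O1). *)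

From Stdlib Require Import List Relations Setoid Morphisms PeanoNat.
Import ListNotations.

Local Arguments MVerd {Act} _.
Local Arguments MPre {Act} _ _.
Local Arguments MSum {Act} _ _.
Local Arguments MVar {Act} _.

Set Implicit Arguments.

Inductive leaf : Type := LVerd (v : verdict) | LVar (x : nat).

Section Completeness.
Variable Act : Type.
Notation mon := (mon Act).
Notation deq := (derivable (@Evp Act)).

Definition L (v : verdict) (m : mon) (s : list Act) : Prop := wstep m s (MVerd v).

Lemma step_from_verd v al (t : mon) : step (MVerd v) al t -> t = MVerd v.
Proof. intro H; inversion H; auto. Qed.

Lemma step_tau_to_verd (m t : mon) : step m None t -> exists v, t = MVerd v.
Proof.
  intro H. remember (@None Act) as al.
  induction H; subst; try discriminate; eauto.
Qed.

Lemma tau_star_inv (m t : mon) : tau_star m t -> t = m \/ step m None t.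
Proof.
  intro H. induction H as [m t H|m|m t u _ IH1 _ IH2]; auto.
  destruct IH1 as [->|H1]; auto.
  destruct IH2 as [->|H2]; auto.
  destruct (step_tau_to_verd H1) as [v ->]. apply step_from_verd in H2. subst; auto.
Qed.

Lemma tau_star_to_verd (m : mon) v : tau_star m (MVerd v) <-> step m None (MVerd v).
Proof.
  split; [|intro H; apply rt_step; exact H].
  intro H. destruct (tau_star_inv H) as [<-|H']; auto. constructor.
Qed.

Lemma step_sum al (t1 t2 t : mon) : step (MSum t1 t2) al t <-> step t1 al t \/ step t2 al t.
Proof.
  split; [intro H; inversion H; subst; auto|].
  intros [H|H]; [apply st_suml|apply st_sumr]; auto.
Qed.

Lemma wstep_tau_l (m m' t : mon) s : tau_star m m' -> wstep m' s t -> wstep m s t.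
Proof.
  destruct s as [|a s]; simpl; intros H1 H2.
  - eapply rt_trans; eauto.
  - destruct H2 as (m1 & m2 & m3 & A & B & C & D).
    exists m1, m2, m3. repeat split; auto. eapply rt_trans; eauto.
Qed.

Lemma wstep_cons (m : mon) a s t :
  wstep m (a :: s) t <->
  exists m1 m2, (m1 = m \/ step m None m1) /\ step m1 (Some a) m2 /\ wstep m2 s t.
Proof.
  split.
  - intros (m1 & m2 & m3 & H1 & H2 & H3 & H4).
    exists m1, m2. split; [destruct (tau_star_inv H1); auto|split; auto].
    eapply wstep_tau_l; eauto.
  - intros (m1 & m2 & H1 & H2 & H3).
    exists m1, m2, m2. repeat split; auto; [|apply rt_refl].
    destruct H1 as [->|H1]; [apply rt_refl|apply rt_step; auto].
Qed.
Lemma wstep_from_verd v s (t : mon) : wstep (MVerd v) s t -> t = MVerd v.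
Proof.
  revert t. induction s as [|a s IH]; simpl; intros t H.
  - destruct (tau_star_inv H) as [->|H']; auto. exact (step_from_verd H').
  - apply wstep_cons in H. destruct H as (m1 & m2 & H1 & H2 & H3).
    assert (E1 : m1 = MVerd v) by (destruct H1 as [->|H1]; auto; exact (step_from_verd H1)).
    subst m1. apply step_from_verd in H2. subst m2. auto.
Qed.

Lemma wstep_verd_loop v s : wstep (MVerd v : mon) s (MVerd v).
Proof.
  induction s as [|a s IH]; [apply rt_refl|].
  apply wstep_cons. exists (MVerd v), (MVerd v). repeat split; auto. constructor.
Qed.

Lemma L_verd v v' s : L v (MVerd v' : mon) s <-> v' = v.
Proof.
  split; [intro H; apply wstep_from_verd in H; congruence|].
  intros ->. apply wstep_verd_loop.
Qed.

Lemma L_pre v a (t : mon) s : L v (MPre a t) s <-> exists s', s = a :: s' /\ L v t s'.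
Proof.
  unfold L. destruct s as [|b s]; split.
  - intro H. apply tau_star_to_verd in H. inversion H.
  - intros (s' & E & _). discriminate.
  - intro H. apply wstep_cons in H. destruct H as (m1 & m2 & [->|H1] & H2 & H3).
    + inversion H2; subst. eauto.
    + inversion H1.
  - intros (s' & E & H). injection E as -> ->. apply wstep_cons.
    exists (MPre a t), t. repeat split; auto. constructor.
Qed.

Lemma L_sum v (t1 t2 : mon) s : L v (MSum t1 t2) s <-> L v t1 s \/ L v t2 s.
Proof.
  unfold L. destruct s as [|a s].
  - simpl. rewrite !tau_star_to_verd. apply step_sum.
  - rewrite !wstep_cons. split.
    + intros (m1 & m2 & [->|H1] & H2 & H3).
      * apply step_sum in H2. destruct H2; [left; exists t1|right; exists t2]; eauto.
      * apply step_sum in H1. destruct H1; [left|right]; exists m1, m2; auto.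
    + intros [(m1 & m2 & [->|H1] & H2 & H3)|(m1 & m2 & [->|H1] & H2 & H3)];
        [exists (MSum t1 t2)|exists m1|exists (MSum t1 t2)|exists m1];
        exists m2; rewrite ?step_sum; auto.
Qed.

Definition path : Type := (list Act * leaf)%type.

Definition leaf_mon (u : leaf) : mon :=
  match u with LVerd v => MVerd v | LVar x => MVar x end.

Fixpoint paths (m : mon) : list path :=
  match m with
  | MVerd v => [([], LVerd v)]
  | MPre a m => map (fun p => (a :: fst p, snd p)) (paths m)
  | MSum m n => paths m ++ paths n
  | MVar x => [([], LVar x)]
  end.

Lemma L_subst_paths (sg : nat -> mon) v (m : mon) s :
  L v (subst sg m) s <->
  exists w u r, In (w, u) (paths m) /\ s = w ++ r /\ L v (subst sg (leaf_mon u)) r.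
Proof.
  revert s. induction m as [v0|a m IH|m1 IH1 m2 IH2|x]; intro s; simpl.
  - split; [intro H; exists [], (LVerd v0), s; simpl; auto|].
    intros (w & u & r & [E|[]] & -> & H). injection E as <- <-. exact H.
  - rewrite L_pre. split.
    + intros (s' & -> & H). apply IH in H. destruct H as (w & u & r & Hin & -> & H).
      exists (a :: w), u, r. split; auto. apply in_map_iff. exists (w, u); auto.
    + intros (w & u & r & Hin & -> & H). apply in_map_iff in Hin.
      destruct Hin as ([w' u'] & E & Hin). injection E as <- <-.
      exists (w' ++ r). split; auto. apply IH. exists w', u', r. auto.
  - rewrite L_sum, IH1, IH2. split.
    + intros [(w & u & r & H)|(w & u & r & H)]; exists w, u, r; rewrite in_app_iff; tauto.
    + intros (w & u & r & Hin & H). apply in_app_iff in Hin.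
      destruct Hin; [left|right]; exists w, u, r; auto.
  - split; [intro H; exists [], (LVar x), s; simpl; auto|].
    intros (w & u & r & [E|[]] & -> & H). injection E as <- <-. exact H.
Qed.

Definition prefix (w0 w : list Act) : Prop := exists r, w = w0 ++ r.

Lemma prefix_snoc_fresh (b : Act) w w0 r :
  w ++ [b] = w0 ++ r -> ~ In b w0 -> exists r', w = w0 ++ r' /\ r = r' ++ [b].
Proof.
  intros E Hb. destruct (app_eq_app _ _ _ _ E) as (l & [[E1 E2]|[E1 E2]]); eauto.
  destruct l as [|c l].
  - exists []. rewrite app_nil_r in *. subst. auto.
  - injection E2 as -> _. exfalso. apply Hb. subst w0. apply in_app_iff. simpl; auto.
Qed.

Definition covered (P : list path) (v : verdict) (w : list Act) : Prop :=
  exists w0, In (w0, LVerd v) P /\ prefix w0 w.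

(* When the path [(w, u)] is absorbed by the paths [P]: the condition under
   which the axioms let the sum of [P] absorb the path term [w.u]. *)
Definition path_absorbed (P : list path) (w : list Act) (u : leaf) : Prop :=
  match u with
  | LVerd v => v = vend \/ covered P v w
  | LVar x => In (w, LVar x) P \/ (covered P vyes w /\ covered P vno w)
  end.

Definition end_subst : nat -> mon := fun _ => MVerd vend.

Definition probe (v : verdict) (b : Act) (x : nat) : nat -> mon :=
  fun y => if Nat.eqb y x then MPre b (MVerd v) else MVerd vend.

Lemma verd_path_covered (m n : mon) v w : v <> vend ->
  (forall s, L v (subst end_subst n) s -> L v (subst end_subst m) s) ->
  In (w, LVerd v) (paths n) -> covered (paths m) v w.
Proof.
  intros Hv Hnm Hin.
  assert (Hn : L v (subst end_subst n) w).
  { apply L_subst_paths. exists w, (LVerd v), []. rewrite app_nil_r.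
    repeat split; auto. apply L_verd; auto. }
  apply Hnm, L_subst_paths in Hn. destruct Hn as (w0 & u & r & Hin0 & -> & H).
  destruct u as [v'|y]; simpl in H; apply L_verd in H; [subst|congruence].
  exists w0. split; auto. exists r; auto.
Qed.

Lemma var_path_absorbed (m n : mon) v b x w : v <> vend -> ~ In b w ->
  (forall w0 u0, In (w0, u0) (paths m) -> ~ In b w0) ->
  (forall s, L v (subst (probe v b x) n) s -> L v (subst (probe v b x) m) s) ->
  In (w, LVar x) (paths n) -> In (w, LVar x) (paths m) \/ covered (paths m) v w.
Proof.
  intros Hv Hbw Hbm Hnm Hin.
  assert (Hn : L v (subst (probe v b x) n) (w ++ [b])).
  { apply L_subst_paths. exists w, (LVar x), [b]. repeat split; auto.
    simpl. unfold probe. rewrite Nat.eqb_refl. apply L_pre.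
    exists []. split; auto. apply L_verd; auto. }
  apply Hnm, L_subst_paths in Hn. destruct Hn as (w0 & u & r & Hin0 & E & H).
  destruct (prefix_snoc_fresh b w w0 r E (Hbm _ _ Hin0)) as (r' & Ew & Er).
  destruct u as [v'|y]; simpl in H.
  - apply L_verd in H. subst v'. right. exists w0. split; auto. exists r'; auto.
  - unfold probe in H. destruct (Nat.eqb_spec y x) as [->|Hyx].
    + apply L_pre in H. destruct H as (s' & -> & _). left.
      destruct r' as [|c r'].
      * rewrite app_nil_r in Ew. subst. auto.
      * injection Er as -> _. exfalso. apply Hbw. subst w. apply in_app_iff. simpl; auto.
    + apply L_verd in H. congruence.
Qed.

Lemma paths_absorbed (m n : mon) : infinite_type Act -> mequiv m n ->
  forall w u, In (w, u) (paths n) -> path_absorbed (paths m) w u.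
Proof.
  intros Hinf Heq w [v|x] Hin; simpl.
  - destruct (Heq end_subst) as [Ha Hr]; [intro; exact I|].
    destruct v; [left; auto|right..]; (eapply verd_path_covered; [discriminate| |exact Hin]);
      intro s; [apply Ha|apply Hr].
  - destruct (Hinf (w ++ concat (map fst (paths m)))) as [b Hb].
    assert (Hbw : ~ In b w) by (intro; apply Hb, in_app_iff; auto).
    assert (Hbm : forall w0 u0, In (w0, u0) (paths m) -> ~ In b w0).
    { intros w0 u0 H H'. apply Hb, in_app_iff. right. apply in_concat.
      exists w0. split; auto. apply in_map_iff. exists (w0, u0); auto. }
    assert (Hcl : forall v, closed_subst (probe v b x)).
    { intros v y. unfold probe. destruct (y =? x); exact I. }
    destruct (Heq _ (Hcl vyes)) as [Ha _].
    destruct (Heq _ (Hcl vno)) as [_ Hr].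
    assert (Hyes : In (w, LVar x) (paths m) \/ covered (paths m) vyes w).
    { eapply var_path_absorbed with (n := n); eauto; [discriminate|intro s; apply Ha]. }
    assert (Hno : In (w, LVar x) (paths m) \/ covered (paths m) vno w).
    { eapply var_path_absorbed with (n := n); eauto; [discriminate|intro s; apply Hr]. }
    tauto.
Qed.


Instance deq_equiv : Equivalence deq.
Proof.
  split; [intro; apply d_refl|intros ? ? ?; apply d_sym; auto|].
  intros ? ? ? ? ?; eapply d_trans; eauto.
Qed.

Instance sum_proper : Proper (deq ==> deq ==> deq) (@MSum Act).
Proof. intros ? ? ? ? ? ?; apply d_sum; auto. Qed.

Instance pre_proper : Proper (eq ==> deq ==> deq) (@MPre Act).
Proof. intros ? ? -> ? ? ?; apply d_pre; auto. Qed.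

Definition inst3 (t1 t2 t3 : mon) : nat -> mon :=
  fun k => match k with 0 => t1 | 1 => t2 | _ => t3 end.

Lemma ax_instance (t1 t2 t3 l r : mon) :
  Evp l r -> deq (subst (inst3 t1 t2 t3) l) (subst (inst3 t1 t2 t3) r).
Proof. intro H. apply d_subst, d_ax, H. Qed.

Lemma ax_comm (t1 t2 : mon) : deq (MSum t1 t2) (MSum t2 t1).
Proof. exact (ax_instance t1 t2 t1 (Evp_Ev (A1 Act))). Qed.

Lemma ax_assoc (t1 t2 t3 : mon) : deq (MSum t1 (MSum t2 t3)) (MSum (MSum t1 t2) t3).
Proof. exact (ax_instance t1 t2 t3 (Evp_Ev (A2 Act))). Qed.

Lemma ax_idem (t : mon) : deq (MSum t t) t.
Proof. exact (ax_instance t t t (Evp_Ev (A3 Act))). Qed.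

Lemma ax_end (t : mon) : deq (MSum t (MVerd vend)) t.
Proof. exact (ax_instance t t t (Evp_Ev (A4 Act))). Qed.

Lemma ax_dist a (t1 t2 : mon) : deq (MPre a (MSum t1 t2)) (MSum (MPre a t1) (MPre a t2)).
Proof. exact (ax_instance t1 t2 t1 (Evp_Ev (Da a))). Qed.

Lemma ax_o1 (t : mon) :
  deq (MSum (MVerd vyes) (MVerd vno)) (MSum (MSum (MVerd vyes) (MVerd vno)) t).
Proof. exact (ax_instance t t t (O1 Act)). Qed.

Lemma ax_pre_end a : deq (MPre a (MVerd vend)) (MVerd vend).
Proof. apply d_ax, Evp_Ev, Ea. Qed.

(* Every verdict may emit any action and stay put (Y_a and N_a; for [end] this
   follows from E_a and idempotence). *)
Lemma ax_verd v a : deq (MVerd v) (MSum (MVerd v) (MPre a (MVerd v))).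
Proof.
  destruct v; [|apply d_ax, Evp_Ev, Ya|apply d_ax, Evp_Ev, Na].
  rewrite ax_pre_end. symmetry. apply ax_idem.
Qed.


Definition pw (w : list Act) (t : mon) : mon := fold_right (@MPre Act) t w.

Definition path_mon (p : path) : mon := pw (fst p) (leaf_mon (snd p)).

Fixpoint sumL (l : list path) : mon :=
  match l with [] => MVerd vend | p :: l => MSum (path_mon p) (sumL l) end.

Lemma pw_cong w (t t' : mon) : deq t t' -> deq (pw w t) (pw w t').
Proof. intro H. induction w as [|a w IH]; simpl; auto. rewrite IH. reflexivity. Qed.

Lemma pw_app w1 w2 (t : mon) : pw (w1 ++ w2) t = pw w1 (pw w2 t).
Proof. apply fold_right_app. Qed.

Lemma pw_sum w (t t' : mon) : deq (pw w (MSum t t')) (MSum (pw w t) (pw w t')).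
Proof. induction w as [|a w IH]; simpl; [reflexivity|]. rewrite IH. apply ax_dist. Qed.

Lemma pw_end w : deq (pw w (MVerd vend)) (MVerd vend).
Proof. induction w as [|a w IH]; simpl; [reflexivity|]. rewrite IH. apply ax_pre_end. Qed.

Lemma sumL_app l1 l2 : deq (sumL (l1 ++ l2)) (MSum (sumL l1) (sumL l2)).
Proof.
  induction l1 as [|p l1 IH]; simpl.
  - rewrite ax_comm. symmetry. apply ax_end.
  - rewrite IH. apply ax_assoc.
Qed.

Lemma pre_sumL a l : deq (MPre a (sumL l)) (sumL (map (fun p => (a :: fst p, snd p)) l)).
Proof. induction l as [|p l IH]; simpl; [apply ax_pre_end|]. rewrite ax_dist, IH. reflexivity. Qed.

Lemma normal_form (m : mon) : deq m (sumL (paths m)).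
Proof.
  induction m as [v|a m IH|m1 IH1 m2 IH2|x]; simpl.
  - symmetry; apply ax_end.
  - rewrite IH at 1. apply pre_sumL.
  - rewrite sumL_app, <- IH1, <- IH2. reflexivity.
  - symmetry; apply ax_end.
Qed.

Definition summand (t T : mon) : Prop := deq (MSum t T) T.

Lemma summand_antisym (t T : mon) : summand t T -> summand T t -> deq t T.
Proof. unfold summand. intros H1 H2. rewrite <- H2 at 1. rewrite ax_comm. exact H1. Qed.

Lemma summand_plus (t1 t2 T : mon) : summand t1 T -> summand t2 T -> summand (MSum t1 t2) T.
Proof. unfold summand. intros H1 H2. rewrite <- ax_assoc, H2. exact H1. Qed.

Lemma summand_absorbed (t1 t2 T : mon) : summand t1 T -> deq t1 (MSum t1 t2) -> summand t2 T.
Proof.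
  unfold summand. intros H1 H2. rewrite <- H1 at 1.
  rewrite ax_assoc, (ax_comm t2 t1), <- H2. exact H1.
Qed.

Lemma summand_in l p : In p l -> summand (path_mon p) (sumL l).
Proof.
  unfold summand. induction l as [|q l IH]; simpl; [contradiction|].
  intros [<-|Hin].
  - rewrite ax_assoc, ax_idem. reflexivity.
  - rewrite ax_assoc, (ax_comm (path_mon p) (path_mon q)), <- ax_assoc, IH; auto.
    reflexivity.
Qed.

Lemma summand_sumL l T : (forall p, In p l -> summand (path_mon p) T) -> summand (sumL l) T.
Proof.
  induction l as [|p l IH]; simpl; intro H.
  - unfold summand. rewrite ax_comm. apply ax_end.
  - apply summand_plus; auto.
Qed.

Lemma verd_absorbs_pw v r : deq (MVerd v) (MSum (MVerd v) (pw r (MVerd v))).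
Proof.
  induction r as [|a r IH]; simpl; [symmetry; apply ax_idem|].
  rewrite (ax_verd v a) at 1. rewrite IH at 2.
  rewrite ax_dist, ax_assoc, <- (ax_verd v a). reflexivity.
Qed.

Lemma summand_covered l v w : covered l v w -> summand (pw w (MVerd v)) (sumL l).
Proof.
  intros (w0 & Hin & r & ->). apply summand_absorbed with (t1 := pw w0 (MVerd v)).
  - exact (summand_in l (w0, LVerd v) Hin).
  - rewrite pw_app, <- pw_sum. apply pw_cong, verd_absorbs_pw.
Qed.

(* Axiom O1: once both verdicts are reachable along [w], anything may follow [w]. *)
Lemma summand_yes_no w (u T : mon) :
  summand (pw w (MVerd vyes)) T -> summand (pw w (MVerd vno)) T -> summand (pw w u) T.
Proof.
  intros H1 H2. apply summand_absorbed with (t1 := MSum (pw w (MVerd vyes)) (pw w (MVerd vno))).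
  - apply summand_plus; auto.
  - rewrite <- !pw_sum. apply pw_cong, ax_o1.
Qed.

Lemma summand_path_absorbed l w u :
  path_absorbed l w u -> summand (path_mon (w, u)) (sumL l).
Proof.
  unfold path_mon; simpl. destruct u as [v|x]; simpl.
  - intros [->|H]; [|apply summand_covered; auto].
    unfold summand. rewrite pw_end, ax_comm. apply ax_end.
  - intros [H|[H1 H2]]; [exact (summand_in l (w, LVar x) H)|].
    apply summand_yes_no; apply summand_covered; auto.
Qed.

Lemma mequiv_sym (m n : mon) : mequiv m n -> mequiv n m.
Proof. intros H s Hs. destruct (H s Hs) as [A B]. split; intro; symmetry; auto. Qed.

Lemma summand_normal_forms (m n : mon) :
  infinite_type Act -> mequiv m n -> summand (sumL (paths n)) (sumL (paths m)).
Proof.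
  intros Hinf Heq. apply summand_sumL. intros [w u] Hin.
  apply summand_path_absorbed. eapply paths_absorbed; eauto.
Qed.

End Completeness.

Theorem mainTheorem9 (Act : Type) (Hinf : infinite_type Act) (m n : mon Act) :
  mequiv m n -> derivable (@Evp Act) m n.
Proof.
  intro Heq.
  apply d_trans with (t' := sumL (paths m)); [apply normal_form|].
  apply d_trans with (t' := sumL (paths n)); [|apply d_sym, normal_form].
  apply summand_antisym; apply summand_normal_forms; auto.
  apply mequiv_sym; exact Heq.
Qed.
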